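(* Let $A$ be a unique factorization domain and $R$ a subring of $A$ whose group of units equals that of $A$. Consider: (i) $\operatorname{Irr}R\subset\operatorname{Irr}A$; (ii) $\operatorname{Sqf}R\subset\operatorname{Sqf}A$; (iii) $\operatorname{Irr}R\subset\operatorname{Sqf}A$. Then (i) implies (ii) and (ii) implies (iii).
   Context: For a commutative ring $R$, $\operatorname{Irr}R$ is the set of irreducible elements of $R$ and $\operatorname{Sqf}R$ the set of square-free elements, where $a\in R$ is square-free if it cannot be written as $a=b^2c$ with $b,c\in R$ and $b$ not a unit of $R$. *)

From HB Require Import structures.
From mathcomp Require Import all_boot all_order all_algebra all_fingroup.
Set Implicit Arguments. Unset Strict Implicit. Unset Printing Implicit Defensive.
Import GRing.Theory.
Local Open Scope ring_scope.

(* A subring R of a commutative ring A is represented by its carrier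
   S : {pred A}, assumed subring_closed. *)

Definition unit_in (A : comNzRingType) (S : {pred A}) (x : A) : Prop :=
  x \in S /\ exists2 y, y \in S & x * y = 1.

Definition irr_in (A : comNzRingType) (S : {pred A}) (a : A) : Prop :=
  [/\ a \in S, a != 0, ~ unit_in S a &
      forall b c, b \in S -> c \in S -> a = b * c -> unit_in S b \/ unit_in S c].

Definition sqf_in (A : comNzRingType) (S : {pred A}) (a : A) : Prop :=
  a \in S /\
  ~ (exists b c, [/\ b \in S, c \in S, a = b ^+ 2 * c & ~ unit_in S b]).

Definition Irr (A : comNzRingType) : A -> Prop := irr_in (@predT A).
Definition Sqf (A : comNzRingType) : A -> Prop := sqf_in (@predT A).

Definition associated (A : comUnitRingType) (x y : A) : Prop :=
  exists2 u, u \is a GRing.unit & x = u * y.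

Definition UFD (A : idomainType) : Prop :=
  (forall a : A, a != 0 -> a \isn't a GRing.unit ->
     exists2 s : seq A, (forall x, x \in s -> Irr x) & a = \prod_(x <- s) x)
  /\
  (forall s t : seq A, (forall x, x \in s -> Irr x) -> (forall x, x \in t -> Irr x) ->
     \prod_(x <- s) x = \prod_(x <- t) x ->
     exists e : size s = size t, exists sigma : 'S_(size s),
       forall i : 'I_(size s),
         associated (nth 0 s i) (nth 0 t (cast_ord e (sigma i)))).

(* Every element of R has a factorization into irreducibles of R: induct on
   the length of its factorization in A, which strictly drops for a proper
   factor.  If (i) holds and a is square-free in R but a = b^2 c in A with b
   a non-unit, some irreducible p of A divides b, so p^2 divides the product
   of the R-irreducible (hence A-irreducible) factors of a; by uniqueness of
   factorization in A two of these factors are associates, s_i = u s_j.  As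
   u is a unit of A, hence of R, a = s_j^2 (u * rest) in R, a contradiction.
   Finally an irreducible of any ring is square-free there, so (ii) gives (iii). *)
From HB Require Import structures.
From mathcomp Require Import all_boot all_order all_algebra all_fingroup.
From mathcomp Require Import ring.
From Stdlib Require Import Classical.
Set Implicit Arguments. Unset Strict Implicit.
Import GRing.Theory.
Local Open Scope ring_scope.

Section Associates.
Variable A : comUnitRingType.

Lemma associated_refl (x : A) : associated x x.
Proof. by exists 1; rewrite ?unitr1 ?mul1r. Qed.

Lemma associated_sym (x y : A) : associated x y -> associated y x.
Proof. by case=> u uU ->; exists u^-1; rewrite ?unitrV ?mulKr. Qed.

Lemma associated_trans (x y z : A) :
  associated x y -> associated y z -> associated x z.
Proof.
by case=> u uU -> [v vU ->]; exists (u * v); rewrite ?unitrM ?uU // mulrA.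
Qed.

End Associates.

Lemma prod_nth_pair (R : comNzRingType) (s : seq R) (i j : 'I_(size s)) :
  i != j ->
  \prod_(y <- s) y = s`_i * s`_j * \prod_(k < size s | (k != i) && (k != j)) s`_k.
Proof.
move=> ij; rewrite (big_nth 0) big_mkord (bigD1 i) //= (bigD1 j) 1?eq_sym //=.
by rewrite mulrA.
Qed.

Section Irreducibles.
Variable A : idomainType.

Lemma unit_in_predT (x : A) : unit_in predT x <-> x \is a GRing.unit.
Proof.
split; first by case=> _ [y _ xy1]; apply/unitrPr; exists y.
by move=> xU; split=> //; exists x^-1; rewrite ?mulrV.
Qed.

Lemma Irr_unitMl (u p : A) : u \is a GRing.unit -> Irr p -> Irr (u * p).
Proof.
move=> uU [_ p0 pN pI]; have u0 : u != 0 by apply: contraTneq uU => ->; rewrite unitr0.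
split=> //; first by rewrite mulf_neq0.
  by move/unit_in_predT; rewrite unitrM uU => /unit_in_predT.
move=> b c _ _ upbc; have [|bU|] := pI (u^-1 * b) c isT isT; last by right.
  by rewrite -mulrA -upbc mulKr.
by left; move/unit_in_predT: bU; rewrite unitrM unitrV uU => /unit_in_predT.
Qed.

End Irreducibles.

Section UniqueFactorization.
Variables (A : idomainType) (ufdA : UFD A).

Lemma UFD_Irr_dvd (b : A) : b != 0 -> b \isn't a GRing.unit ->
  exists2 p, Irr p & exists B, b = p * B.
Proof.
move=> b0 bN; have [[|p t] tI bt] := ufdA.1 b b0 bN.
  by move: bN; rewrite bt big_nil unitr1.
by exists p; [apply: tI; rewrite mem_head | exists (\prod_(y <- t) y); rewrite bt big_cons].
Qed.

Lemma UFD_factor_Irr_mul (p d : A) : Irr p -> d != 0 ->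
  exists p' r, [/\ associated p' p, {in p' :: r, forall y, Irr y} &
                   p * d = \prod_(y <- p' :: r) y].
Proof.
move=> pI d0; have [dU | dN] := boolP (d \is a GRing.unit).
  exists (d * p), [::]; split; first by exists d.
    by move=> y; rewrite mem_seq1 => /eqP ->; apply: Irr_unitMl.
  by rewrite big_seq1 mulrC.
have [r rI dr] := ufdA.1 d d0 dN.
exists p, r; split; first exact: associated_refl.
  by move=> y; rewrite inE => /predU1P[-> | /rI].
by rewrite big_cons -dr.
Qed.

Lemma UFD_size_factor_lt (b c : A) (tb t : seq A) :
  b != 0 -> c != 0 -> c \isn't a GRing.unit ->
  {in tb, forall y, Irr y} -> b = \prod_(y <- tb) y ->
  {in t, forall y, Irr y} -> b * c = \prod_(y <- t) y ->
  (size tb < size t)%N.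
Proof.
move=> b0 c0 cN tbI btb tI bct; have [tc tcI ctc] := ufdA.1 c c0 cN.
have tbcI : {in tb ++ tc, forall y, Irr y}.
  by move=> y; rewrite mem_cat => /orP[/tbI | /tcI].
have tbct : \prod_(y <- tb ++ tc) y = \prod_(y <- t) y by rewrite big_cat -btb -ctc.
have [e _] := ufdA.2 (tb ++ tc) t tbcI tI tbct; rewrite -e.
rewrite size_cat -{1}[size tb]addn0 ltn_add2l lt0n size_eq0.
by apply: contraNneq cN => tc0; rewrite ctc tc0 big_nil unitr1.
Qed.

Lemma UFD_sqr_dvd_associated_factors (s : seq A) (b c : A) :
  {in s, forall y, Irr y} -> \prod_(y <- s) y = b ^+ 2 * c ->
  \prod_(y <- s) y != 0 -> b \isn't a GRing.unit ->
  exists i j : 'I_(size s), i != j /\ associated s`_i s`_j.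
Proof.
move=> sI sbc s0 bN.
have b0 : b != 0 by apply: contraNneq s0 => b0; rewrite sbc b0 expr0n mul0r.
have [p pI [B bpB]] := UFD_Irr_dvd b0 bN.
have spd : \prod_(y <- s) y = p * (p * (B * B * c)) by rewrite sbc bpB; ring.
have d0 : B * B * c != 0 by apply: contraNneq s0 => d0; rewrite spd d0 !mulr0.
have [p' [r [p'p p'rI pdpr]]] := UFD_factor_Irr_mul pI d0.
set L := [:: p, p' & r].
have LI : {in L, forall y, Irr y}.
  by move=> y; rewrite inE => /predU1P[-> // | /p'rI].
have sL : \prod_(y <- s) y = \prod_(y <- L) y.
  by rewrite big_cons -pdpr spd.
have [e [sg sgL]] := ufdA.2 s L sI LI sL.
(* i and j index the factors of s that the matching assigns to p and p'. *)
pose i := (sg^-1)%g (cast_ord (esym e) (Ordinal (isT : (0 < size L)%N))).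
pose j := (sg^-1)%g (cast_ord (esym e) (Ordinal (isT : (1 < size L)%N))).
have := sgL i; have := sgL j; rewrite /i /j !permKV !cast_ordKV /= => sjp' sip.
exists i, j; split.
  apply/negP=> /eqP /perm_inj /(congr1 (cast_ord e)).
  by rewrite !cast_ordKV => /(congr1 val).
exact: associated_trans sip (associated_sym (associated_trans sjp' p'p)).
Qed.

End UniqueFactorization.

Section SquareFreeInSubring.
Variables (A : comNzRingType) (S : {pred A}).
Hypothesis SM : {in S &, forall u v, u * v \in S}.

Lemma unit_inMl (b c : A) : b \in S -> c \in S -> unit_in S (b * c) -> unit_in S b.
Proof. by move=> bS cS [_ [y yS bcy1]]; split=> //; exists (c * y); rewrite ?SM // mulrA. Qed.

Lemma irr_in_sqf_in (a : A) : irr_in S a -> sqf_in S a.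
Proof.
case=> aS _ _ aI; split=> // -[b [c [bS cS abc bN]]].
have [|//|bcU] := aI b (b * c) bS (SM bS cS); first by rewrite abc expr2 mulrA.
by apply/bN/(unit_inMl bS cS).
Qed.

End SquareFreeInSubring.

Section Subring.
Variables (A : idomainType) (S : {pred A}).
Hypotheses (ufdA : UFD A) (Ssub : subring_closed S)
  (unit_inS : forall x : A, unit_in S x <-> x \is a GRing.unit).

Let S1 : 1 \in S. Proof. by case: Ssub. Qed.
Let SM : {in S &, forall u v, u * v \in S}. Proof. by case: Ssub. Qed.
Let S0 : 0 \in S. Proof. by case: Ssub => _ SB _; rewrite -(subrr 1) SB. Qed.

Lemma prod_in_subring I (r : seq I) (P : pred I) (F : I -> A) :
  (forall i, P i -> F i \in S) -> \prod_(i <- r | P i) F i \in S.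
Proof. exact: (big_ind (fun x => x \in S)). Qed.

Lemma sqf_in_neq0 (a : A) : sqf_in S a -> a != 0.
Proof.
case=> _ aN; apply/eqP=> a0; apply: aN; exists 0, 0; split=> //.
  by rewrite a0 mulr0.
by case=> _ [y _]; rewrite mul0r => /eqP; rewrite eq_sym oner_eq0.
Qed.

Lemma not_irr_in_factor (x : A) :
  x \in S -> x != 0 -> ~ unit_in S x -> ~ irr_in S x ->
  exists b c, [/\ b \in S, c \in S, x = b * c, ~ unit_in S b & ~ unit_in S c].
Proof.
move=> xS x0 xN xI; apply: NNPP => noFactor; apply: xI; split=> // b c bS cS xbc.
apply: NNPP => bcN; apply: noFactor; exists b, c.
by split=> // => [bU | cU]; apply: bcN; [left | right].
Qed.

Lemma irr_in_factorization (x : A) :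
  x \in S -> x != 0 -> x \isn't a GRing.unit ->
  exists2 s : seq A, {in s, forall y, irr_in S y} & x = \prod_(y <- s) y.
Proof.
move=> xS x0 xN; have [t tI xt] := ufdA.1 x x0 xN.
have [n tn] := ubnP (size t); elim: n => // n IH in x t xS x0 xN tI xt tn *.
have [xI | xNI] := classic (irr_in S x).
  by exists [:: x]; [move=> y; rewrite mem_seq1 => /eqP -> | rewrite big_seq1].
have xNS : ~ unit_in S x by move/unit_inS; apply/negP.
have [b [c [bS cS xbc bN cN]]] := not_irr_in_factor xS x0 xNS xNI.
have b0 : b != 0 by apply: contraNneq x0 => b0; rewrite xbc b0 mul0r.
have c0 : c != 0 by apply: contraNneq x0 => c0; rewrite xbc c0 mulr0.
have bNA : b \isn't a GRing.unit by apply/negP => /unit_inS.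
have cNA : c \isn't a GRing.unit by apply/negP => /unit_inS.
have [tb tbI btb] := ufdA.1 b b0 bNA; have [tc tcI ctc] := ufdA.1 c c0 cNA.
have tbt : (size tb < size t)%N.
  by apply: (UFD_size_factor_lt ufdA b0 c0 cNA tbI btb tI); rewrite -xbc.
have tct : (size tc < size t)%N.
  by apply: (UFD_size_factor_lt ufdA c0 b0 bNA tcI ctc tI); rewrite mulrC -xbc.
have [sb sbI bsb] := IH b tb bS b0 bNA tbI btb (leq_trans tbt tn).
have [sc scI csc] := IH c tc cS c0 cNA tcI ctc (leq_trans tct tn).
exists (sb ++ sc); first by move=> y; rewrite mem_cat => /orP[/sbI | /scI].
by rewrite big_cat -bsb -csc.
Qed.

Lemma Sqf_of_sqf_in : (forall a, irr_in S a -> Irr a) -> forall a, sqf_in S a -> Sqf a.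
Proof.
move=> irrI a aSqf; have a0 := sqf_in_neq0 aSqf; case: aSqf => aS aN.
split=> // -[b [c [_ _ abc /unit_in_predT/negP bN]]].
have aNA : a \isn't a GRing.unit by rewrite abc expr2 -mulrA unitrM (negbTE bN).
have [s sI a_s] := irr_in_factorization aS a0 aNA.
have sIrr : {in s, forall y, Irr y} by move=> y /sI /irrI.
have sbc : \prod_(y <- s) y = b ^+ 2 * c by rewrite -a_s.
have s0 : \prod_(y <- s) y != 0 by rewrite -a_s.
have [i [j [ij [u uU siu]]]] := UFD_sqr_dvd_associated_factors ufdA sIrr sbc s0 bN.
have s_irr_in (k : 'I_(size s)) : irr_in S s`_k by apply/sI/mem_nth.
have [sjS _ sjN _] := s_irr_in j.
apply: aN; exists s`_j, (u * \prod_(k < size s | (k != i) && (k != j)) s`_k); split=> //.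
- apply: SM; first by have [] := proj2 (unit_inS u) uU.
  by apply: prod_in_subring => k _; have [] := s_irr_in k.
- by rewrite a_s (prod_nth_pair ij) siu; ring.
Qed.

End Subring.

Theorem lemma3p1 (A : idomainType) (S : {pred A}) :
  UFD A -> subring_closed S ->
  (forall x : A, unit_in S x <-> x \is a GRing.unit) ->
  ((forall a, irr_in S a -> Irr a) -> (forall a, sqf_in S a -> Sqf a)) /\
  ((forall a, sqf_in S a -> Sqf a) -> (forall a, irr_in S a -> Sqf a)).
Proof.
move=> ufdA Ssub unit_inS; split; first exact: Sqf_of_sqf_in.
have SM : {in S &, forall u v, u * v \in S} by case: Ssub.
by move=> sqfI a /(irr_in_sqf_in SM) /sqfI.
Qed.
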